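(* Let $p$ be a prime and $m$ a positive integer with $m+1\le p$. Let $B$ be a finite left brace with $(B,+)\cong(\mathbb{Z}/(p))^m$. Then for every nonzero $x\in B$ one has $o_{\cdot}(x)=o_{+}(x)=p$ (equivalently, the group $(B,\cdot)$ has exponent $p$).
   Context: A left brace is a set $B$ with two binary operations $+$ and $\cdot$ such that $(B,+)$ is an abelian group, $(B,\cdot)$ is a group, and $a\cdot(b+c)+a=a\cdot b+a\cdot c$ for all $a,b,c\in B$; the additive identity $0$ is also the multiplicative identity. $o_{\cdot}(x)$ and $o_{+}(x)$ denote the orders of $x$ in $(B,\cdot)$ and $(B,+)$ respectively. *)

From HB Require Import structures.
From mathcomp Require Import all_boot all_order all_algebra.
Set Implicit Arguments. Unset Strict Implicit. Unset Printing Implicit Defensive.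
Import GRing.Theory.
Local Open Scope ring_scope.

Definition is_left_brace (B : finZmodType) (mul : B -> B -> B) : Prop :=
  [/\ associative mul,
      (forall a, mul 0 a = a /\ mul a 0 = a),
      (forall a, exists b, mul b a = 0 /\ mul a b = 0)
    & (forall a b c, mul a (b + c) + a = mul a b + mul a c)].

Definition mpow (B : finZmodType) (mul : B -> B -> B) (x : B) (n : nat) : B :=
  iter n (mul x) 0.

Definition mul_order_is (B : finZmodType) (mul : B -> B -> B) (x : B) (n : nat) : Prop :=
  (0 < n)%N /\ mpow mul x n = 0 /\
  (forall k, (0 < k)%N -> (k < n)%N -> mpow mul x k <> 0).

Definition add_order_is (B : finZmodType) (x : B) (n : nat) : Prop :=
  (0 < n)%N /\ x *+ n = 0 /\
  (forall k, (0 < k)%N -> (k < n)%N -> x *+ k <> 0).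

From HB Require Import structures.
From mathcomp Require Import all_boot all_order all_algebra all_fingroup.
From mathcomp Require Import cyclic.
Set Implicit Arguments. Unset Strict Implicit. Unset Printing Implicit Defensive.
Import GRing.Theory.
Local Open Scope ring_scope.

(* For a in B put lambda_a(b) = a b - a.  The brace identity makes each lambda_a
   additive and a |-> lambda_a multiplicative, and unfolding the product gives
   a^n = \sum_(i < n) lambda_a^i(a).  Seen in coordinates over F_p, lambda_a is a
   matrix M with M^(p^m) = 1 (Lagrange in (B, .), of order p^m), so M - 1 is
   nilpotent and (M - 1)^m = 0.  As m <= p - 1, the polynomial identity
   \sum_(i < p) X^i = (X - 1)^(p-1) over F_p yields a^p = 0; primality of p
   then pins both orders of a nonzero element to exactly p. *)

Section PowerLaws.
Variables (T : Type) (op : T -> T -> T) (e : T).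
Hypotheses (opA : associative op) (op1x : left_id e op) (opx1 : right_id e op).
Local Notation pow a n := (iter n (op a) e).

Lemma iter_op a n y : iter n (op a) y = op (pow a n) y.
Proof. by elim: n => [|n IHn]; rewrite ?op1x //= IHn opA. Qed.

Lemma pow_add a m n : pow a (m + n) = op (pow a m) (pow a n).
Proof. by rewrite iterD iter_op. Qed.

Lemma pow_mul_eq a k j : pow a k = e -> pow a (j * k) = e.
Proof.
by move=> ak; elim: j => [|j IHj] //; rewrite mulSn pow_add ak op1x.
Qed.

Lemma pow_coprime_eq a k l : (0 < l)%N -> coprime k l ->
  pow a k = e -> pow a l = e -> a = e.
Proof.
move=> l_gt0 co_kl ak al; have [u _] := Bezoutl k l_gt0.
rewrite gcdnC (eqP co_kl) => /dvdnP[c Ec].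
have := congr1 (fun n => pow a n) Ec.
by rewrite pow_add !pow_mul_eq //= !opx1.
Qed.

Lemma order_prime a p : prime p -> a <> e -> pow a p = e ->
  (0 < p)%N /\ pow a p = e /\ (forall k, (0 < k)%N -> (k < p)%N -> pow a k <> e).
Proof.
move=> p_pr a_neq ap; split; first exact: prime_gt0.
split=> // k k_gt0 k_lt ak.
apply: a_neq; apply: (pow_coprime_eq (prime_gt0 p_pr) _ ak ap).
by rewrite coprime_sym prime_coprime // gtnNdvd.
Qed.

End PowerLaws.

Section FiniteGroupLaw.
Variables (T : finType) (op : T -> T -> T) (e : T).
Hypotheses (opA : associative op) (op1x : left_id e op) (opx1 : right_id e op).
Hypothesis opVx : forall a, exists b, op b a = e.

Lemma op_inj a : injective (op a).
Proof.
move=> x y Exy; have [b ba] := opVx a.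
by rewrite -[x]op1x -[y]op1x -ba -!opA Exy.
Qed.

Definition lmul_perm a : {perm T} := perm (@op_inj a).

Lemma lmul_permE a x : lmul_perm a x = op a x. Proof. by rewrite permE. Qed.

Lemma lmul_perm_inj : injective lmul_perm.
Proof. by move=> a b Eab; rewrite -[a]opx1 -[b]opx1 -!lmul_permE Eab. Qed.

Lemma lmul_perm1 : lmul_perm e = 1%g.
Proof. by apply/permP => x; rewrite lmul_permE perm1 op1x. Qed.

Lemma lmul_permM a b : (lmul_perm a * lmul_perm b)%g = lmul_perm (op b a).
Proof. by apply/permP => x; rewrite permM !lmul_permE opA. Qed.

Lemma lmul_permX a n : (lmul_perm a ^+ n)%g = lmul_perm (iter n (op a) e).
Proof.
by elim: n => [|n IHn]; rewrite ?expg0 ?lmul_perm1 // expgSr IHn lmul_permM.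
Qed.

Lemma group_set_lmul_perm : group_set (lmul_perm @: [set: T]).
Proof.
apply/group_setP; split; first by apply/imsetP; exists e; rewrite ?inE ?lmul_perm1.
move=> _ _ /imsetP[a _ ->] /imsetP[b _ ->].
by rewrite lmul_permM imset_f ?inE.
Qed.

(* Lagrange's theorem, through the Cayley embedding into [{perm T}]. *)
Lemma iter_op_card a : iter #|T| (op a) e = e.
Proof.
pose G := Group group_set_lmul_perm.
have cardG : #|G| = #|T| by rewrite card_imset ?cardsT //; apply: lmul_perm_inj.
have /expg_cardG : lmul_perm a \in G by rewrite imset_f ?inE.
by rewrite cardG lmul_permX -lmul_perm1 => /lmul_perm_inj.
Qed.

End FiniteGroupLaw.

Section LeftBrace.
Variables (B : finZmodType) (mul : B -> B -> B).
Hypothesis brace : is_left_brace mul.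

Lemma brace_mulA : associative mul.
Proof. by case: brace. Qed.

Lemma brace_mul0x : left_id 0 mul.
Proof. by case: brace => _ id0 _ _ a; case: (id0 a). Qed.

Lemma brace_mulx0 : right_id 0 mul.
Proof. by case: brace => _ id0 _ _ a; case: (id0 a). Qed.

Lemma brace_mulVx a : exists b, mul b a = 0.
Proof. by case: brace => _ _ inv _; have [b [ba _]] := inv a; exists b. Qed.

Lemma brace_mulDr a b c : mul a (b + c) + a = mul a b + mul a c.
Proof. by case: brace. Qed.

Definition lambda a b := mul a b - a.

Lemma lambdaD a : {morph lambda a : u v / u + v}.
Proof.
move=> u v; rewrite /lambda (canRL (addrK a) (brace_mulDr a u v)).
by rewrite -addrA addrACA.
Qed.

Lemma lambda0 a : lambda a 0 = 0.
Proof. by rewrite /lambda brace_mulx0 subrr. Qed.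

Lemma lambda_id b : lambda 0 b = b.
Proof. by rewrite /lambda brace_mul0x subr0. Qed.

Lemma brace_mulN a c : mul a (- c) = a + a - mul a c.
Proof.
have := brace_mulDr a c (- c); rewrite subrr brace_mulx0 => ->.
by rewrite addrC addKr.
Qed.

Lemma lambdaM a c b : lambda (mul a c) b = lambda a (lambda c b).
Proof.
rewrite /lambda -brace_mulA.
rewrite (canRL (addrK a) (brace_mulDr a (mul c b) (- c))) brace_mulN.
by rewrite -addrA -opprD addrCA [RHS]addrC addKr.
Qed.

Lemma lambda_mpow a n b : lambda (mpow mul a n) b = iter n (lambda a) b.
Proof. by elim: n => [|n IHn]; rewrite ?lambda_id //= lambdaM IHn. Qed.

Lemma iter_lambda_card a b : iter #|B| (lambda a) b = b.
Proof.
rewrite -lambda_mpow /mpow.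
by rewrite (iter_op_card brace_mulA brace_mul0x brace_mulx0 brace_mulVx) lambda_id.
Qed.

Lemma mpow_sum_lambda a n : mpow mul a n = \sum_(i < n) iter i (lambda a) a.
Proof.
elim: n => [|n IHn]; first by rewrite big_ord0.
rewrite big_ord_recl /= -[mul a _](subrKC a) -/(lambda a _) -/(mpow mul a n) IHn.
by rewrite (big_morph _ (lambdaD a) (lambda0 a)).
Qed.

End LeftBrace.

Lemma morph_add_mulrn (U V : zmodType) (f : U -> V) :
  {morph f : x y / x + y} -> forall x n, f (x *+ n) = f x *+ n.
Proof.
move=> fD x; have f0 : f 0 = 0 by apply: (addrI (f 0)); rewrite -fD !addr0.
by elim=> [|n IHn]; rewrite ?mulr0n // !mulrS fD IHn.
Qed.

Lemma mx_nilpotent_bound (F : fieldType) n (N : 'M[F]_n.+1) k :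
  N ^+ k = 0 -> N ^+ n.+1 = 0.
Proof.
move=> Nk; have hornerX j : horner_mx N (('X - 0%:P) ^+ j) = N ^+ j.
  by rewrite subr0 rmorphXn /= horner_mx_X.
have /dvdp_exp_XsubCP[j jk Ej] : mxminpoly N %| ('X - 0%:P) ^+ k.
  by apply: mxminpoly_min; rewrite hornerX.
have Nj : N ^+ j = 0.
  by rewrite -hornerX; apply/mxminpoly_minP; rewrite -(eqp_dvdr _ Ej) dvdpp.
have j_le : (j <= n.+1)%N.
  rewrite -ltnS -(size_exp_XsubC j (0 : F)) -(eqp_size Ej) -(size_char_poly N).
  exact: dvdp_leq (monic_neq0 (char_poly_monic N)) (mxminpoly_dvd_char N).
by rewrite -[X in N ^+ X](subnKC j_le) exprD Nj mul0r.
Qed.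

Section PrimeField.
Variable p : nat.

Lemma Fp_additive_mx n (g : 'rV['F_p]_n -> 'rV['F_p]_n) :
  {morph g : u v / u + v} -> exists M : 'M['F_p]_n, forall u, g u = u *m M.
Proof.
move=> gD; have g0 : g 0 = 0 by rewrite -(mulr0n 0) morph_add_mulrn.
have gZ (c : 'F_p) u : g (c *: u) = c *: g u.
  by rewrite -[c]natr_Zp !scaler_nat morph_add_mulrn.
exists (\matrix_(i, j) g (delta_mx 0 i) 0 j) => u.
rewrite [in LHS](row_sum_delta u) [in RHS](row_sum_delta u) mulmx_suml.
rewrite (big_morph g gD g0); apply: eq_bigr => j _.
rewrite gZ -scalemxAl; congr (_ *: _).
by apply/rowP => k; rewrite -rowE !mxE.
Qed.

Lemma additive_transport_mx (V : zmodType) n (f : V -> 'rV['F_p]_n) (h : V -> V) :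
  bijective f -> {morph f : x y / x + y} -> {morph h : x y / x + y} ->
  exists M : 'M['F_p]_n, forall k v, f (iter k h v) = f v *m M ^+ k.
Proof.
move=> [finv fK Kf] fD hD.
have finvD : {morph finv : u v / u + v}.
  by move=> u v; apply: (can_inj fK); rewrite fD !Kf.
have [M fhM] : exists M, forall u, f (h (finv u)) = u *m M.
  by apply: Fp_additive_mx => u v; rewrite finvD hD fD.
exists M => k v; elim: k => [|k IHk]; first by rewrite expr0 mulmx1.
by rewrite iterS -[iter k h v]fK fhM IHk -mulmxA mulmxE -exprSr.
Qed.

Hypothesis p_pr : prime p.

Lemma pnat_pchar_Fpoly k : [pchar {poly 'F_p}].-nat (p ^ k)%N.
Proof.
have p_pchar : p \in [pchar {poly 'F_p}] by rewrite pchar_poly pchar_Fp.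
by rewrite (eq_pnat _ (pcharf_eq p_pchar)) pnatX pnat_id.
Qed.

Lemma Fp_exp_XsubC1 k : ('X - 1 : {poly 'F_p}) ^+ (p ^ k)%N = 'X ^+ (p ^ k)%N - 1.
Proof. by rewrite exprDn_pchar ?exprNn_pchar ?expr1n ?pnat_pchar_Fpoly. Qed.

Lemma Fp_sum_expX : \sum_(i < p) ('X : {poly 'F_p}) ^+ i = ('X - 1) ^+ p.-1.
Proof.
have XsubC1_neq0 : ('X - 1 : {poly 'F_p}) != 0 by rewrite -polyC1 polyXsubC_eq0.
apply: (mulfI XsubC1_neq0); rewrite -subrX1 -exprS prednK ?prime_gt0 //.
by have := Fp_exp_XsubC1 1; rewrite expn1 => ->.
Qed.

(* In characteristic [p], [M - 1] is nilpotent of index at most [n.+1 <= p.-1],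
   and [\sum_(i < p) M ^+ i = (M - 1) ^+ p.-1]. *)
Lemma Fp_unipotent_sum_expr n (M : 'M['F_p]_n.+1) k :
  M ^+ (p ^ k)%N = 1 -> (n.+1 < p)%N -> \sum_(i < p) M ^+ i = 0.
Proof.
move=> Mpk n_lt_p.
have hornerXsub1 j : horner_mx M (('X - 1) ^+ j) = (M - 1) ^+ j.
  by rewrite rmorphXn rmorphB rmorph1 /= horner_mx_X.
have nilM : (M - 1) ^+ n.+1 = 0.
  apply: (@mx_nilpotent_bound _ _ _ (p ^ k)%N).
  by rewrite -hornerXsub1 Fp_exp_XsubC1 rmorphB rmorphXn rmorph1 /= horner_mx_X Mpk subrr.
have -> : \sum_(i < p) M ^+ i = horner_mx M (\sum_(i < p) 'X ^+ i).
  by rewrite rmorph_sum; apply: eq_bigr => i _; rewrite rmorphXn /= horner_mx_X.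
have n_le : (n.+1 <= p.-1)%N by rewrite -ltnS prednK ?prime_gt0.
by rewrite Fp_sum_expX hornerXsub1 -(subnKC n_le) exprD nilM mul0r.
Qed.

End PrimeField.

Theorem lemma2p6 (p m : nat) (B : finZmodType) (mul : B -> B -> B)
  (f : B -> 'rV['F_p]_m) :
  prime p -> (0 < m)%N -> (m + 1 <= p)%N ->
  is_left_brace mul ->
  {morph f : x y / x + y} -> bijective f ->
  forall x : B, x != 0 -> mul_order_is mul x p /\ add_order_is x p.
Proof.
case: m f => [//|m] f p_pr _ m_lt_p brace fD f_bij x /eqP x_neq0.
have f_inj : injective f := bij_inj f_bij.
have f0 : f 0 = 0 by have := morph_add_mulrn fD 0 0; rewrite !mulr0n.
have [M fM] := additive_transport_mx f_bij fD (lambdaD brace x).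
have cardB : #|B| = (p ^ m.+1)%N.
  by rewrite (bij_eq_card f_bij) card_mx card_Fp // mul1n.
have Mpm : M ^+ (p ^ m.+1) = 1.
  apply/row_matrixP => i; have [finv _ Kf] := f_bij.
  by rewrite !rowE mulmx1 -[delta_mx 0 i]Kf -fM -cardB iter_lambda_card.
have mpow_p : mpow mul x p = 0.
  apply: f_inj; rewrite f0 (mpow_sum_lambda brace) (big_morph f fD f0).
  rewrite (eq_bigr _ (fun (i : 'I_p) _ => fM i x)) -mulmx_sumr.
  by rewrite (Fp_unipotent_sum_expr p_pr Mpm) ?mulmx0 // -addn1.
have mulrn_p : x *+ p = 0.
  by apply: f_inj; rewrite morph_add_mulrn // f0 -scaler_nat pchar_Fp_0 ?scale0r.
split.
  exact: (order_prime (brace_mulA brace) (brace_mul0x brace) (brace_mulx0 brace)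
    p_pr x_neq0 mpow_p).
have [p_gt0 [_ no_k]] := order_prime (@addrA B) (@add0r B) (@addr0 B) p_pr x_neq0
  (etrans (iter_addr_0 _ _) mulrn_p).
by split=> //; split=> // k k_gt0 k_lt_p; rewrite -iter_addr_0; apply: no_k.
Qed.
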